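(* Assume $g$ satisfies (Hg). Let $a\in(0,1)$ and $k>1$, and define $$d^+(a,k):=\max_{y\in(1-a,1)}\frac{-g(1-y;a)}{ky},\qquad d^*(a,k):=(1-k^{-1/2})^{-2}\,d^+(a,k).$$ Then for every $d>d^*(a,k)$ we have $c(a,d,k)<0$.
   Context: A function $g:\mathbb R\times[0,1]\to\mathbb R$, $(u,a)\mapsto g(u;a)$, satisfies (Hg) if it is $C^1$ and for every $a\in(0,1)$: $g(0;a)=g(a;a)=g(1;a)=0$, $g'(0;a)<0$, $g'(1;a)<0$, $g'(a;a)>0$ (where $g'=\partial_u g$), $g(v;a)>0$ for $v\in(-\infty,0)\cup(a,1)$ and $g(v;a)<0$ for $v\in(0,a)\cup(1,\infty)$. For $k>0$, $a\in(0,1)$, $d>0$ consider the traveling wave problem: find $c\in\mathbb R$ and $\Phi:\mathbb R\to\mathbb R$ with $$-c\Phi'(\xi)=d\big(k\Phi(\xi+1)-(k+1)\Phi(\xi)+\Phi(\xi-1)\big)+g(\Phi(\xi);a)\quad(\xi\in\mathbb R),\qquad \lim_{\xi\to-\infty}\Phi(\xi)=0,\ \lim_{\xi\to+\infty}\Phi(\xi)=1.$$ It is known (Mallet-Paret) that under (Hg) this problem has a solution with $\Phi$ non-decreasing and that the speed $c$ is uniquely determined; it is denoted $c(a,d,k)$. *)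

From Stdlib Require Import Reals Lra.
Open Scope R_scope.

Definition cont_on_strip (F : R -> R -> R) : Prop :=
  forall u a, 0 <= a <= 1 -> forall eps, 0 < eps -> exists delta, 0 < delta /\
    forall v b, 0 <= b <= 1 -> Rabs (v - u) < delta -> Rabs (b - a) < delta ->
      Rabs (F v b - F u a) < eps.

(* g is C^1 on R x [0,1]: partial derivatives gu = d/du g and ga = d/da g
   exist everywhere on R x [0,1] (the one in a taken within [0,1], i.e.
   one-sided at a = 0, 1) and are continuous on R x [0,1]. *)
Definition C1_strip (g gu : R -> R -> R) : Prop :=
  exists ga : R -> R -> R,
    (forall u a, 0 <= a <= 1 -> derivable_pt_lim (fun v => g v a) u (gu u a)) /\
    (forall u a, 0 <= a <= 1 -> forall eps, 0 < eps -> exists delta, 0 < delta /\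
       forall b, 0 <= b <= 1 -> b <> a -> Rabs (b - a) < delta ->
         Rabs ((g u b - g u a) / (b - a) - ga u a) < eps) /\
    cont_on_strip gu /\ cont_on_strip ga /\ cont_on_strip g.

Definition Hg (g : R -> R -> R) : Prop :=
  exists gu : R -> R -> R,
    C1_strip g gu /\
    forall a, 0 < a < 1 ->
      g 0 a = 0 /\ g a a = 0 /\ g 1 a = 0 /\
      gu 0 a < 0 /\ gu 1 a < 0 /\ 0 < gu a a /\
      (forall v, (v < 0 \/ (a < v /\ v < 1)) -> 0 < g v a) /\
      (forall v, ((0 < v /\ v < a) \/ 1 < v) -> g v a < 0).

(* Phi' is required to exist (and to be the function Dphi) whenever c <> 0;
   when c = 0 the term -c Phi' vanishes and no differentiability is needed. *)
Definition TW_solution (g : R -> R -> R) (k a d c : R) (Phi : R -> R) : Prop :=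
  (exists Dphi : R -> R,
     (c <> 0 -> forall xi, derivable_pt_lim Phi xi (Dphi xi)) /\
     forall xi,
       - c * Dphi xi =
       d * (k * Phi (xi + 1) - (k + 1) * Phi xi + Phi (xi - 1)) + g (Phi xi) a) /\
  (forall eps, 0 < eps -> exists M, forall xi, xi < M -> Rabs (Phi xi) < eps) /\
  (forall eps, 0 < eps -> exists M, forall xi, M < xi -> Rabs (Phi xi - 1) < eps).

Definition nondecreasing (Phi : R -> R) : Prop :=
  forall x y, x <= y -> Phi x <= Phi y.

Definition is_dplus (g : R -> R -> R) (a k dp : R) : Prop :=
  (exists y, 1 - a < y < 1 /\ - g (1 - y) a / (k * y) = dp) /\
  (forall y, 1 - a < y < 1 -> - g (1 - y) a / (k * y) <= dp).

Definition dstar (dp k : R) : R := / (1 - / sqrt k) ^ 2 * dp.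

From Stdlib Require Import Reals Lra.
Open Scope R_scope.

(* If c >= 0, the wave is a subsolution: d (k Phi(x+1) - (k+1) Phi x + Phi(x-1)) + g(Phi x) <= 0.
   Put W = 1 - Phi and s = sqrt k.  Since -g(u) <= k d^+ (1 - u) on [0,1] and
   d (s - 1)^2 > k d^+, the ratio condition s W(y+1) < W(y) propagates from y to y - 1.
   It holds where Phi crosses a: to the right of that point g(Phi) >= 0, so
   k (Phi(y+1) - Phi y) <= Phi y - Phi(y-1), which telescopes to k W(x0+1) <= W(x0).
   Hence W(x0 - j) >= s^j W(x0) is unbounded, contradicting W <= 1. *)

Lemma INR_unbounded (A : R) : exists n : nat, A < INR n.
Proof.
  destruct (INR_archimed 1 A Rlt_0_1) as [n Hn].
  exists n. lra.
Qed.

Lemma nondecreasing_derivative_nonneg (f : R -> R) (x l : R) :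
  nondecreasing f -> derivable_pt_lim f x l -> 0 <= l.
Proof.
  intros Hmon Hder.
  destruct (Rle_or_lt 0 l) as [|Hl]; [assumption | exfalso].
  destruct (Hder (- l / 2)) as [delta Hdelta]; [lra |].
  pose proof (cond_pos delta) as Hpos.
  assert (Hquot : 0 <= (f (x + delta / 2) - f x) / (delta / 2)).
  { apply Rle_mult_inv_pos; [| lra].
    assert (f x <= f (x + delta / 2)) by (apply Hmon; lra). lra. }
  assert (Habs : Rabs (delta / 2) < delta) by (rewrite Rabs_right; lra).
  specialize (Hdelta (delta / 2) ltac:(lra) Habs).
  apply Rabs_def2 in Hdelta. lra.
Qed.

Lemma nonneg_speed_term_nonpos (Phi : R -> R) (c xi D : R) :
  nondecreasing Phi -> 0 <= c ->
  (c <> 0 -> derivable_pt_lim Phi xi D) -> - c * D <= 0.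
Proof.
  intros Hmon Hc Hder.
  destruct (Req_dec c 0) as [Hc0 | Hc0].
  - rewrite Hc0. lra.
  - pose proof (nondecreasing_derivative_nonneg Phi xi D Hmon (Hder Hc0)). nra.
Qed.

Lemma nondecreasing_ge_lim_minfty (f : R -> R) (l : R) :
  nondecreasing f ->
  (forall eps, 0 < eps -> exists M, forall x, x < M -> Rabs (f x - l) < eps) ->
  forall x, l <= f x.
Proof.
  intros Hmon Hlim x.
  destruct (Rle_or_lt l (f x)) as [|Hlt]; [assumption | exfalso].
  destruct (Hlim (l - f x)) as [M HM]; [lra |].
  assert (Hz : f (Rmin M x - 1) <= f x) by (apply Hmon; pose proof (Rmin_r M x); lra).
  specialize (HM (Rmin M x - 1) ltac:(pose proof (Rmin_l M x); lra)).
  apply Rabs_def2 in HM. lra.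
Qed.

Lemma nondecreasing_le_lim_pinfty (f : R -> R) (l : R) :
  nondecreasing f ->
  (forall eps, 0 < eps -> exists M, forall x, M < x -> Rabs (f x - l) < eps) ->
  forall x, f x <= l.
Proof.
  intros Hmon Hlim x.
  destruct (Rle_or_lt (f x) l) as [|Hlt]; [assumption | exfalso].
  destruct (Hlim (f x - l)) as [M HM]; [lra |].
  assert (Hz : f x <= f (Rmax M x + 1)) by (apply Hmon; pose proof (Rmax_r M x); lra).
  specialize (HM (Rmax M x + 1) ltac:(pose proof (Rmax_l M x); lra)).
  apply Rabs_def2 in HM. lra.
Qed.

Lemma nondecreasing_unit_step_crossing (f : R -> R) (a x y : R) :
  nondecreasing f -> x <= y -> f x < a -> a <= f y ->
  exists z, f z < a /\ a <= f (z + 1).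
Proof.
  intros Hmon Hxy Hx Hy.
  destruct (INR_unbounded (y - x)) as [N HN].
  assert (HxN : a <= f (x + INR N)) by (apply (Rle_trans _ (f y)); [| apply Hmon]; lra).
  clear Hy HN. induction N as [| N IH].
  - rewrite Rplus_0_r in HxN. lra.
  - destruct (Rlt_or_le (f (x + INR N)) a) as [Hlt | Hle].
    + exists (x + INR N). rewrite S_INR, <- Rplus_assoc in HxN. auto.
    + exact (IH Hle).
Qed.

Lemma dstar_lt_threshold (dp k d : R) :
  1 < k -> dstar dp k < d -> k * dp < d * (sqrt k - 1) ^ 2.
Proof.
  unfold dstar. intros Hk Hd.
  set (s := sqrt k) in *.
  assert (Hss : s * s = k) by (apply sqrt_sqrt; lra).
  assert (Hs : 1 < s) by (rewrite <- sqrt_1; apply sqrt_lt_1; lra).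
  assert (Hfactor : k * (1 - / s) ^ 2 = (s - 1) ^ 2) by (rewrite <- Hss; field; lra).
  assert (Hpos : 0 < (1 - / s) ^ 2).
  { apply pow_lt. assert (/ s < 1) by (rewrite <- Rinv_1; apply Rinv_lt_contravar; lra). lra. }
  apply (Rmult_lt_compat_r ((1 - / s) ^ 2)) in Hd; [| exact Hpos].
  replace (/ (1 - / s) ^ 2 * dp * (1 - / s) ^ 2) with dp in Hd by (field; lra).
  rewrite <- Hfactor.
  replace (d * (k * (1 - / s) ^ 2)) with (k * (d * (1 - / s) ^ 2)) by ring.
  apply Rmult_lt_compat_l; lra.
Qed.

(* With Wm, W0, W1 the deficits 1 - Phi at y - 1, y, y + 1 and s^2 = k: the wave
   inequality at y reads d ((k+1) W0 - k W1 - Wm) <= k dp W0. *)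
Lemma deficit_ratio_step (k s d dp W1 W0 Wm : R) :
  0 < s -> s * s = k -> 0 < d -> k * dp < d * (s - 1) ^ 2 -> 0 <= W0 ->
  d * ((k + 1) * W0 - k * W1 - Wm) <= dp * k * W0 ->
  s * W1 < W0 -> s * W0 < Wm.
Proof.
  intros Hs Hss Hd Hthr HW0 Hineq Hratio.
  assert (HkW1 : d * k * W1 < d * s * W0).
  { rewrite <- Hss. replace (d * (s * s) * W1) with (d * s * (s * W1)) by ring.
    apply Rmult_lt_compat_l; [apply Rmult_lt_0_compat |]; lra. }
  assert (Hgap : 0 <= (d * (s - 1) ^ 2 - k * dp) * W0) by (apply Rmult_le_pos; lra).
  apply (Rmult_lt_reg_l d); [exact Hd |].
  rewrite <- Hss in Hgap, Hineq, HkW1. nra.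
Qed.

Lemma deficit_geometric_growth (W : R -> R) (s y : R) :
  0 <= s ->
  (forall z, s * W (z + 1) < W z -> s * W z < W (z - 1)) ->
  s * W (y + 1) < W y ->
  forall j : nat, s ^ j * W y <= W (y - INR j).
Proof.
  intros Hs Hstep Hy.
  assert (Hratio : forall j : nat, s * W (y - INR j + 1) < W (y - INR j) /\
                                   s ^ j * W y <= W (y - INR j)).
  { induction j as [| j [IHratio IHpow]].
    - rewrite Rminus_0_r, pow_O, Rmult_1_l. split; [exact Hy | lra].
    - rewrite S_INR.
      replace (y - (INR j + 1) + 1) with (y - INR j) by ring.
      replace (y - (INR j + 1)) with (y - INR j - 1) by ring.
      pose proof (Hstep _ IHratio) as Hnext.
      split; [exact Hnext |].
      rewrite <- tech_pow_Rmult, Rmult_assoc.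
      apply Rlt_le, (Rle_lt_trans _ (s * W (y - INR j))); [| exact Hnext].
      apply Rmult_le_compat_l; assumption. }
  intros j. exact (proj2 (Hratio j)).
Qed.

(* Telescoping k (f(y+1) - f y) <= f y - f(y-1) from y = x + 1 on and letting the
   right end go to +oo. *)
Lemma concave_tail_deficit_bound (f : R -> R) (k x : R) :
  0 < k -> (forall y, f y <= 1) ->
  (forall eps, 0 < eps -> exists M, forall y, M < y -> Rabs (f y - 1) < eps) ->
  (forall y, x + 1 <= y -> k * f (y + 1) - (k + 1) * f y + f (y - 1) <= 0) ->
  k * (1 - f (x + 1)) <= 1 - f x.
Proof.
  intros Hk Hle1 Hlim Hconc.
  assert (Htele : forall J : nat,
            k * (f (x + INR J + 1) - f (x + 1)) <= f (x + INR J) - f x).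
  { induction J as [| J IH].
    - rewrite Rplus_0_r. lra.
    - pose proof (Hconc (x + INR J + 1) ltac:(pose proof (pos_INR J); lra)) as HJ.
      replace (x + INR J + 1 - 1) with (x + INR J) in HJ by ring.
      rewrite S_INR, <- !Rplus_assoc. lra. }
  destruct (Rle_or_lt (k * (1 - f (x + 1))) (1 - f x)) as [|Hgt]; [assumption | exfalso].
  destruct (Hlim ((k * (1 - f (x + 1)) - (1 - f x)) / k)) as [M HM].
  { apply Rdiv_lt_0_compat; lra. }
  destruct (INR_unbounded (M - x)) as [J HJ].
  specialize (HM (x + INR J + 1) ltac:(lra)).
  apply Rabs_def2 in HM as [_ HM].
  apply (Rmult_lt_compat_l k) in HM; [| exact Hk].
  replace (k * - ((k * (1 - f (x + 1)) - (1 - f x)) / k))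
    with (1 - f x - k * (1 - f (x + 1))) in HM by (field; lra).
  specialize (Htele J). specialize (Hle1 (x + INR J)). lra.
Qed.

Section NonnegativeSpeed.

Variables (g : R -> R -> R) (a k dp d : R) (Phi : R -> R).

Hypothesis a_range : 0 < a < 1.
Hypothesis k_gt1 : 1 < k.
Hypothesis g_zero_0 : g 0 a = 0.
Hypothesis g_zero_a : g a a = 0.
Hypothesis g_zero_1 : g 1 a = 0.
Hypothesis g_neg : forall v, 0 < v < a -> g v a < 0.
Hypothesis g_pos : forall v, a < v < 1 -> 0 < g v a.
Hypothesis dp_dplus : is_dplus g a k dp.

Lemma dplus_pos : 0 < dp.
Proof.
  destruct dp_dplus as [[y [Hy <-]] _].
  apply Rdiv_lt_0_compat.
  - assert (g (1 - y) a < 0) by (apply g_neg; lra). lra.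
  - apply Rmult_lt_0_compat; lra.
Qed.

Lemma neg_g_le_dplus (u : R) : 0 <= u <= 1 -> - g u a <= dp * k * (1 - u).
Proof.
  intros Hu.
  pose proof dplus_pos as Hdp.
  assert (Hrhs : 0 <= dp * k * (1 - u)) by (apply Rmult_le_pos; [apply Rmult_le_pos |]; lra).
  destruct (Rtotal_order u a) as [Hlt | [-> | Hgt]].
  - destruct (Req_dec u 0) as [-> | Hu0]; [rewrite g_zero_0; lra |].
    destruct dp_dplus as [_ Hmax].
    specialize (Hmax (1 - u) ltac:(lra)).
    replace (1 - (1 - u)) with u in Hmax by ring.
    apply (Rmult_le_compat_r (k * (1 - u))) in Hmax; [| apply Rmult_le_pos; lra].
    replace (- g u a / (k * (1 - u)) * (k * (1 - u))) with (- g u a) in Hmax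
      by (field; split; lra).
    lra.
  - rewrite g_zero_a. lra.
  - destruct (Req_dec u 1) as [-> | Hu1]; [rewrite g_zero_1; lra |].
    assert (0 < g u a) by (apply g_pos; lra). lra.
Qed.

Lemma g_nonneg_above (u : R) : a <= u <= 1 -> 0 <= g u a.
Proof.
  intros Hu.
  destruct (Req_dec u a) as [-> | Hua]; [rewrite g_zero_a; lra |].
  destruct (Req_dec u 1) as [-> | Hu1]; [rewrite g_zero_1; lra |].
  apply Rlt_le, g_pos. lra.
Qed.

Hypothesis d_threshold : k * dp < d * (sqrt k - 1) ^ 2.
Hypothesis Phi_nondecreasing : nondecreasing Phi.
Hypothesis Phi_range : forall x, 0 <= Phi x <= 1.
Hypothesis Phi_lim_minfty :
  forall eps, 0 < eps -> exists M, forall xi, xi < M -> Rabs (Phi xi) < eps.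
Hypothesis Phi_lim_pinfty :
  forall eps, 0 < eps -> exists M, forall xi, M < xi -> Rabs (Phi xi - 1) < eps.
Hypothesis Phi_subsolution :
  forall xi, d * (k * Phi (xi + 1) - (k + 1) * Phi xi + Phi (xi - 1)) + g (Phi xi) a <= 0.

Let s := sqrt k.

Lemma sqrt_k_gt1 : 1 < s.
Proof. rewrite <- sqrt_1. apply sqrt_lt_1; lra. Qed.

Lemma d_pos : 0 < d.
Proof.
  pose proof dplus_pos.
  assert (0 < k * dp) by (apply Rmult_lt_0_compat; lra).
  assert (0 <= (s - 1) ^ 2) by apply pow2_ge_0.
  destruct (Rle_or_lt d 0); [unfold s in *; nra | assumption].
Qed.

Lemma deficit_ratio_propagates (y : R) :
  s * (1 - Phi (y + 1)) < 1 - Phi y -> s * (1 - Phi y) < 1 - Phi (y - 1).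
Proof.
  apply (deficit_ratio_step k s d dp).
  - pose proof sqrt_k_gt1. lra.
  - apply sqrt_sqrt. lra.
  - exact d_pos.
  - exact d_threshold.
  - pose proof (Phi_range y). lra.
  - pose proof (Phi_subsolution y). pose proof (neg_g_le_dplus (Phi y) (Phi_range y)). lra.
Qed.

Lemma deficit_ratio_at_crossing :
  exists x0, Phi x0 < a /\ s * (1 - Phi (x0 + 1)) < 1 - Phi x0.
Proof.
  destruct (Phi_lim_minfty a) as [M0 HM0]; [lra |].
  destruct (Phi_lim_pinfty (1 - a)) as [M1 HM1]; [lra |].
  set (x1 := Rmax M1 (M0 - 1) + 1).
  assert (Hle : M0 - 1 <= x1) by (pose proof (Rmax_r M1 (M0 - 1)); unfold x1; lra).
  assert (Hstart : Phi (M0 - 1) < a).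
  { specialize (HM0 (M0 - 1) ltac:(lra)). apply Rabs_def2 in HM0. lra. }
  assert (Hend : a <= Phi x1).
  { specialize (HM1 x1 ltac:(pose proof (Rmax_l M1 (M0 - 1)); unfold x1; lra)).
    apply Rabs_def2 in HM1. lra. }
  destruct (nondecreasing_unit_step_crossing Phi a (M0 - 1) x1
              Phi_nondecreasing Hle Hstart Hend) as [x0 [Hbelow Habove]].
  exists x0. split; [exact Hbelow |].
  assert (Hconc : forall y, x0 + 1 <= y ->
                    k * Phi (y + 1) - (k + 1) * Phi y + Phi (y - 1) <= 0).
  { intros y Hy.
    assert (0 <= g (Phi y) a).
    { apply g_nonneg_above. pose proof (Phi_nondecreasing _ _ Hy). pose proof (Phi_range y). lra. }
    pose proof (Phi_subsolution y). pose proof d_pos.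
    apply (Rmult_le_reg_l d); lra. }
  pose proof (concave_tail_deficit_bound Phi k x0 ltac:(lra)
                (fun y => proj2 (Phi_range y)) Phi_lim_pinfty Hconc) as Htail.
  assert (Hss : s * s = k) by (apply sqrt_sqrt; lra).
  pose proof (Phi_range (x0 + 1)). pose proof sqrt_k_gt1. nra.
Qed.

Lemma nondecreasing_front_nonneg_speed_absurd : False.
Proof.
  destruct deficit_ratio_at_crossing as [x0 [Hbelow Hratio]].
  pose proof sqrt_k_gt1 as Hs.
  pose proof (deficit_geometric_growth (fun x => 1 - Phi x) s x0 ltac:(lra)
                deficit_ratio_propagates Hratio) as Hgrowth.
  destruct (Pow_x_infinity s ltac:(rewrite Rabs_right; lra) (/ (1 - Phi x0) + 1))
    as [j Hj].
  specialize (Hj j (Nat.le_refl j)). rewrite Rabs_right in Hj by (left; apply pow_lt; lra).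
  specialize (Hgrowth j). simpl in Hgrowth.
  pose proof (Phi_range (x0 - INR j)).
  assert (Hinv : / (1 - Phi x0) * (1 - Phi x0) = 1) by (field; lra).
  assert (0 < 1 - Phi x0) by lra.
  nra.
Qed.

End NonnegativeSpeed.

Theorem theorem2p5 (g : R -> R -> R) (a k dp : R) :
  Hg g -> 0 < a < 1 -> 1 < k -> is_dplus g a k dp ->
  forall d, dstar dp k < d ->
  forall (c : R) (Phi : R -> R),
    nondecreasing Phi -> TW_solution g k a d c Phi -> c < 0.
Proof.
  intros [gu [_ Hsigns]] Ha Hk Hdp d Hd c Phi Hmon [[Dphi [Hder Heq]] [Hlim0 Hlim1]].
  destruct (Rlt_or_le c 0) as [| Hc]; [assumption | exfalso].
  destruct (Hsigns a Ha) as (Hg0 & Hga & Hg1 & _ & _ & _ & Hpos & Hneg).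
  apply (nondecreasing_front_nonneg_speed_absurd g a k dp d Phi); try assumption.
  - intros v Hv. apply Hneg. left. exact Hv.
  - intros v Hv. apply Hpos. right. exact Hv.
  - exact (dstar_lt_threshold dp k d Hk Hd).
  - intros x. split.
    + apply (nondecreasing_ge_lim_minfty Phi 0 Hmon). intros eps Heps.
      destruct (Hlim0 eps Heps) as [M HM]. exists M. intros y Hy. rewrite Rminus_0_r. auto.
    + exact (nondecreasing_le_lim_pinfty Phi 1 Hmon Hlim1 x).
  - intros xi. rewrite <- Heq.
    exact (nonneg_speed_term_nonpos Phi c xi (Dphi xi) Hmon Hc (fun Hc0 => Hder Hc0 xi)).
Qed.
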